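(* Let $\epsilon>0$, $y\in\mathbb R^d$, and for $i\in[k]$ let $a_i\in\mathbb R^d$ and $b_i>0$. Consider the feasibility problem of finding $\tilde y\in\mathbb R^d$ with $\|\tilde y-y\|_\infty\le\epsilon$ and $\|\tilde y-a_i\|_\infty\ge b_i$ for all $i\in[k]$. For $j\in[d]$ and $t\in\mathbb R$ let $S_j(t)=\{i\in[k]: |t-a_{i,j}|\ge b_i\}$. Then: (1) if $\tilde y$ satisfies $\|\tilde y-y\|_\infty\le\epsilon$ and $\bigcup_{j=1}^d S_j(\tilde y_j)=[k]$, then $\tilde y$ is a solution of the feasibility problem; (2) for $j\in[d]$ let $P_j=\bigcup_{i=1}^k\big(\{a_{i,j}-b_i,\,a_{i,j}+b_i\}\cap[y_j-\epsilon,y_j+\epsilon]\big)$, or $P_j=\{y_j\}$ if this set is empty, and let $P=\{p\in\mathbb R^d: p_j\in P_j \text{ for all } j\in[d]\}$; then if the feasibility problem has a solution, $P$ contains a solution. *)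

From HB Require Import structures.
From mathcomp Require Import all_boot all_order all_algebra.
From mathcomp Require Import reals.
Set Implicit Arguments. Unset Strict Implicit. Unset Printing Implicit Defensive.
Import Order.TTheory GRing.Theory Num.Theory.
Local Open Scope ring_scope.

Definition infnorm (R : realType) (d : nat) (v : 'rV[R]_d) : R :=
  \big[Num.max/0]_(j < d) `|v ord0 j|.

Definition feasible (R : realType) (d k : nat) (eps : R) (y : 'rV[R]_d)
  (a : 'I_k -> 'rV[R]_d) (b : 'I_k -> R) (yt : 'rV[R]_d) : Prop :=
  infnorm (yt - y) <= eps /\ (forall i : 'I_k, b i <= infnorm (yt - a i)).

Definition Sj (R : realType) (d k : nat) (a : 'I_k -> 'rV[R]_d) (b : 'I_k -> R)
  (j : 'I_d) (t : R) : {set 'I_k} :=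
  [set i | b i <= `|t - a i ord0 j|].

Definition Pj_raw (R : realType) (d k : nat) (eps : R) (y : 'rV[R]_d)
  (a : 'I_k -> 'rV[R]_d) (b : 'I_k -> R) (j : 'I_d) (p : R) : Prop :=
  exists i : 'I_k, (p = a i ord0 j - b i \/ p = a i ord0 j + b i) /\
                   y ord0 j - eps <= p <= y ord0 j + eps.

Definition Pj (R : realType) (d k : nat) (eps : R) (y : 'rV[R]_d)
  (a : 'I_k -> 'rV[R]_d) (b : 'I_k -> R) (j : 'I_d) (p : R) : Prop :=
  Pj_raw eps y a b j p \/
  ((forall q : R, ~ Pj_raw eps y a b j q) /\ p = y ord0 j).

Definition inP (R : realType) (d k : nat) (eps : R) (y : 'rV[R]_d)
  (a : 'I_k -> 'rV[R]_d) (b : 'I_k -> R) (p : 'rV[R]_d) : Prop :=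
  forall j : 'I_d, Pj eps y a b j (p ord0 j).

(* A solution stays a solution when each coordinate is moved, inside the window
   [y_j - eps, y_j + eps], to the nearest endpoint a_ij +- b_i lying in that
   window (or to y_j if there is none): were the i-th constraint, witnessed by
   coordinate j, lost, then an endpoint of (a_ij - b_i, a_ij + b_i) would lie
   in the window strictly between the old and the new coordinate, hence be
   nearer to the old one. *)
From HB Require Import structures.
From mathcomp Require Import all_boot all_order all_algebra.
From mathcomp Require Import reals.
From mathcomp Require Import lra.
Set Implicit Arguments. Unset Strict Implicit. Unset Printing Implicit Defensive.
Import Order.TTheory GRing.Theory Num.Theory.
Local Open Scope ring_scope.

Section InfNorm.
Variables (R : realType) (d : nat).
Implicit Types (v : 'rV[R]_d) (e : R).

Lemma infnorm_leP v e :
  0 <= e -> reflect (forall j, `|v ord0 j| <= e) (infnorm v <= e).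
Proof.
move=> e_ge0; apply: (iffP idP) => [/bigmax_leP[_ le_e] j|le_e]; first exact: le_e.
by apply/bigmax_leP; split=> // j _; apply: le_e.
Qed.

Lemma infnorm_geP v e :
  0 < e -> reflect (exists j, e <= `|v ord0 j|) (e <= infnorm v).
Proof.
move=> e_gt0; rewrite leNgt; apply: (iffP negP) => [not_lt|[j le_ej]].
  have [/existsP//|/existsPn all_lt] := boolP [exists j, e <= `|v ord0 j|].
  by case: not_lt; apply/bigmax_ltP; split=> // j _; rewrite ltNge all_lt.
by move/bigmax_ltP => [_ /(_ j isT)]; rewrite ltNge le_ej.
Qed.

End InfNorm.

Section Cover.
Variables (R : realType) (d k : nat) (eps : R) (y : 'rV[R]_d).
Variables (a : 'I_k -> 'rV[R]_d) (b : 'I_k -> R).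
Hypothesis b_gt0 : forall i, 0 < b i.

Lemma mem_bigcup_Sj (yt : 'rV[R]_d) i :
  (i \in \bigcup_(j < d) Sj a b j (yt ord0 j)) = (b i <= infnorm (yt - a i)).
Proof.
apply/bigcupP/(infnorm_geP _ (b_gt0 i)) => [[j _]|[j]].
  by rewrite inE => far; exists j; rewrite !mxE.
by rewrite !mxE => far; exists j; rewrite ?inE.
Qed.

Lemma feasible_cover (yt : 'rV[R]_d) :
  feasible eps y a b yt <->
  infnorm (yt - y) <= eps /\ \bigcup_(j < d) Sj a b j (yt ord0 j) = [set: 'I_k].
Proof.
split=> -[near far]; split=> //; first by apply/setP => i; rewrite inE mem_bigcup_Sj far.
by move=> i; rewrite -mem_bigcup_Sj far inE.
Qed.

End Cover.

Section Snap.
Variables (R : realFieldType) (k : nat) (A B : 'I_k -> R) (c eps : R).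

Definition edge (x : 'I_k * bool) : R := A x.1 + (if x.2 then B x.1 else - B x.1).

Definition snap (t : R) : R :=
  if [pick x | `|edge x - c| <= eps] is Some x0
  then edge [arg min_(x < x0 | `|edge x - c| <= eps) `|t - edge x|]%O
  else c.

Lemma snap_spec t :
  (exists x, `|edge x - c| <= eps /\ snap t = edge x) \/
  ((forall x, ~~ (`|edge x - c| <= eps)) /\ snap t = c).
Proof.
rewrite /snap; case: pickP => [x0 x0_near|none_near].
  by case: arg_minP => // x x_near _; left; exists x.
by right; split=> // x; rewrite none_near.
Qed.

Lemma snap_near t : `|t - c| <= eps -> `|snap t - c| <= eps.
Proof.
move=> t_near; have [[x [x_near ->]]//|[_ ->]] := snap_spec t.
by rewrite subrr normr0 (le_trans _ t_near).
Qed.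

Lemma edge_between i t u :
  `|t - c| <= eps -> `|u - c| <= eps -> B i <= `|t - A i| -> `|u - A i| < B i ->
  exists s, `|edge (i, s) - c| <= eps /\ `|t - edge (i, s)| < `|t - u|.
Proof.
rewrite !ler_distl /edge ler_normr ltr_norml.
move=> /andP[t_lo t_hi] /andP[u_lo u_hi] /orP[t_right|t_left] /andP[u_gtA u_ltA].
  exists true; split=> /=; first by rewrite ler_distl; apply/andP; split; lra.
  by rewrite !ger0_norm /=; lra.
exists false; split=> /=; first by rewrite ler_distl; apply/andP; split; lra.
by rewrite (distrC t) (distrC t) !ger0_norm /=; lra.
Qed.

Lemma snap_far t i :
  `|t - c| <= eps -> B i <= `|t - A i| -> B i <= `|snap t - A i|.
Proof.
move=> t_near far; rewrite leNgt; apply/negP => near_i.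
have := edge_between t_near (snap_near t_near) far near_i.
rewrite /snap; case: pickP => [x0 x0_near|none_near] [s [s_near closer]].
  by move: closer; case: arg_minP => // x _ /(_ (i, s) s_near); rewrite ltNge => ->.
by move: (none_near (i, s)); rewrite s_near.
Qed.

End Snap.

Lemma Pj_snap (R : realType) (d k : nat) (eps : R) (y : 'rV[R]_d)
    (a : 'I_k -> 'rV[R]_d) (b : 'I_k -> R) j t :
  Pj eps y a b j (snap (fun i => a i ord0 j) b (y ord0 j) eps t).
Proof.
have [[[i s] [near ->]]|[none_near ->]] :=
  snap_spec (fun i => a i ord0 j) b (y ord0 j) eps t.
  left; exists i; split; last by rewrite -ler_distl.
  by case: s near => _; [right|left].
right; split=> // q [i [q_edge]].
have [s ->] : exists s, q = edge (fun i => a i ord0 j) b (i, s).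
  by case: q_edge => ->; [exists false|exists true].
by move: (none_near (i, s)); rewrite ler_distl => /negP.
Qed.

Theorem lemma4 (R : realType) (d k : nat) (eps : R) (y : 'rV[R]_d)
  (a : 'I_k -> 'rV[R]_d) (b : 'I_k -> R) :
  0 < eps -> (forall i : 'I_k, 0 < b i) ->
  (forall yt : 'rV[R]_d,
     infnorm (yt - y) <= eps ->
     \bigcup_(j < d) Sj a b j (yt ord0 j) = [set: 'I_k] ->
     feasible eps y a b yt)
  /\
  ((exists yt : 'rV[R]_d, feasible eps y a b yt) ->
   exists p : 'rV[R]_d, inP eps y a b p /\ feasible eps y a b p).
Proof.
move=> eps_gt0 b_gt0; split=> [yt near cover|[yt]]; first exact/feasible_cover.
move=> /(feasible_cover eps y a b_gt0) [/(infnorm_leP _ (ltW eps_gt0)) near cover].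
pose p := \row_j snap (fun i => a i ord0 j) b (y ord0 j) eps (yt ord0 j).
have near_j j : `|yt ord0 j - y ord0 j| <= eps by move: (near j); rewrite !mxE.
exists p; split=> [j|]; first by rewrite mxE; apply: Pj_snap.
apply/feasible_cover => //; split.
  by apply/(infnorm_leP _ (ltW eps_gt0)) => j; rewrite !mxE snap_near.
apply/setP => i; rewrite inE; move/setP/(_ i): cover; rewrite inE.
case/bigcupP => j _; rewrite inE => far; apply/bigcupP; exists j => //.
by rewrite inE mxE snap_far.
Qed.
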